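(* Let $H=(V,\mathcal{E})$ be a hypergraph and let $K(H)$ be the graph on vertex set $V$ in which $uv$ is an edge iff $u \neq v$ and $u,v$ belong to a common hyperedge of $H$. For a set $\mathcal{C}$ of cuts, let $\mathcal{M}(\mathcal{C})$ be the integer linear program with one binary variable $x_e\in\{0,1\}$ for each edge $e$ of $K(H)$, which minimizes $\sum_{e\in E(K(H))} x_e$ subject to (1) $\sum_{u,v\in S,\ uv\in E(K(H))} x_{uv}\ \ge |S|-1$ for every $S\in\mathcal{E}$, and (2) $\sum_{e\in E(C)} x_e \ge r-1$ for every cut $C=(X_1,\dots,X_r)\in\mathcal{C}$, where $E(C)$ is the set of edges $xy$ of $K(H)$ with $x\in X_i$, $y\in X_j$, $i\neq j$. For $S\subseteq V$, let $\mathcal{B}_S=\{(X,S\setminus X): X\subseteq S,\ X\notin\{\emptyset,S\}\}$ and let $\mathcal{P}_S$ be the set of all tuples $(X_1,\dots,X_r)$ with $r\ge 2$, each $X_i$ nonempty, the $X_i$ pairwise disjoint and $\bigcup_{i=1}^r X_i=S$. Let $\mathcal{B}_H=\bigcup_{S\in\mathcal{E}}\mathcal{B}_S$ and $\mathcal{P}_H=\bigcup_{S\in\mathcal{E}}\mathcal{P}_S$. Identify a 0-1 assignment $x$ with the graph on $V$ whose edge set is $\{e : x_e=1\}$. Then the optimal solutions of $\mathcal{M}(\mathcal{P}_H)$ are in one-to-one correspondence with the optimal solutions of $\mathcal{M}(\mathcal{B}_H)$, which are in one-to-one correspondence with the optimal solutions of the Minimum Connectivity Inference instance $H$, i.e.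 graphs $G=(V,E)$ with $G[S]$ connected for every $S\in\mathcal{E}$ and $|E|$ minimum.
   Context: A cut is a tuple $(X_1,\dots,X_r)$ with $r\ge 2$ of nonempty, pairwise disjoint subsets of $V$. The Minimum Connectivity Inference (MCI) problem: given a hypergraph $H=(V,\mathcal{E})$, find a graph $G=(V,E)$ such that the induced subgraph $G[S]$ is connected for every hyperedge $S\in\mathcal{E}$ (a feasible solution), minimizing $|E|$. *)

From mathcomp Require Import all_boot all_order.
Set Implicit Arguments. Unset Strict Implicit. Unset Printing Implicit Defensive.

Section MCI.
Variable V : finType.

(* Graph edges (unordered pairs uv, u <> v) are represented as 2-element
   subsets of V; a graph on V is its edge set F : {set {set V}} with every
   element of size 2. *)

Definition is_edge (e : {set V}) : bool := #|e| == 2.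

Definition KH (HE : {set {set V}}) : {set {set V}} :=
  [set e : {set V} | is_edge e & [exists S in HE, e \subset S]].

Definition is_cut (C : seq {set V}) : Prop :=
  2 <= size C /\
  (forall i, i < size C -> nth set0 C i != set0) /\
  (forall i j, i < size C -> j < size C -> i != j ->
     [disjoint nth set0 C i & nth set0 C j]).

Definition cut_edges (HE : {set {set V}}) (C : seq {set V}) : {set {set V}} :=
  [set e in KH HE | [exists x : V, exists y : V,
     (e == [set x; y]) &&
     [exists i : 'I_(size C), exists j : 'I_(size C),
        (i != j) && (x \in nth set0 C i) && (y \in nth set0 C j)]]].

Definition in_B (S : {set V}) (C : seq {set V}) : Prop :=
  exists X : {set V}, X \subset S /\ X != set0 /\ X != S /\ C = [:: X; S :\: X].

Definition in_P (S : {set V}) (C : seq {set V}) : Prop :=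
  is_cut C /\ \bigcup_(X <- C) X = S.

Definition B_H (HE : {set {set V}}) (C : seq {set V}) : Prop :=
  exists2 S, S \in HE & in_B S C.

Definition P_H (HE : {set {set V}}) (C : seq {set V}) : Prop :=
  exists2 S, S \in HE & in_P S C.

(* A 0-1 assignment x on E(K(H)) is identified with the set X of edges e
   with x_e = 1 (a subset of E(K(H))). *)
Definition ilp_feasible (HE : {set {set V}}) (Cs : seq {set V} -> Prop)
    (X : {set {set V}}) : Prop :=
  X \subset KH HE /\
  (forall S, S \in HE -> #|S| - 1 <= #|[set e in X | e \subset S]|) /\
  (forall C, Cs C -> size C - 1 <= #|X :&: cut_edges HE C|).

Definition ilp_optimal (HE : {set {set V}}) (Cs : seq {set V} -> Prop)
    (X : {set {set V}}) : Prop :=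
  ilp_feasible HE Cs X /\
  (forall Y, ilp_feasible HE Cs Y -> #|X| <= #|Y|).

Definition induced_adj (F : {set {set V}}) (S : {set V}) : rel V :=
  fun x y => [&& x \in S, y \in S & [set x; y] \in F].

Definition induced_connected (F : {set {set V}}) (S : {set V}) : Prop :=
  forall u v, u \in S -> v \in S -> connect (induced_adj F S) u v.

Definition mci_feasible (HE : {set {set V}}) (F : {set {set V}}) : Prop :=
  (forall e, e \in F -> is_edge e) /\
  (forall S, S \in HE -> induced_connected F S).

Definition mci_optimal (HE : {set {set V}}) (F : {set {set V}}) : Prop :=
  mci_feasible HE F /\ (forall F', mci_feasible HE F' -> #|F| <= #|F'|).

End MCI.

From mathcomp Require Import all_boot all_order.
Set Implicit Arguments. Unset Strict Implicit. Unset Printing Implicit Defensive.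

(* A set S induces a connected subgraph of F iff every bipartition (A, S \ A)
   of S is crossed by an edge of F.  Greedily merging blocks along crossing
   edges then shows that any partition of such an S into n blocks is crossed
   by at least n - 1 edges of F: singletons give constraint (1), the blocks of
   a cut in P_H give (2).  Hence the feasible sets of M(P_H) and M(B_H)
   coincide, and they are exactly the MCI solutions whose edges lie in K(H);
   since intersecting an MCI solution with K(H) keeps it feasible, the optima
   coincide as well. *)

Section Connectivity.
Variable V : finType.
Implicit Types (F : {set {set V}}) (S A : {set V}).

Definition bipartitions_crossed F S := forall A,
  A \subset S -> A != set0 -> A != S ->
  exists x y, [/\ x \in A, y \in S, y \notin A & [set x; y] \in F].

Lemma path_leaves (e : rel V) A u p :
  u \in A -> last u p \notin A -> path e u p ->
  exists x y, [/\ x \in A, y \notin A & e x y].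
Proof.
elim: p u => [|w p IHp] u uA /=; first by rewrite uA.
move=> lastA /andP[euw pw]; have [wA | wNA] := boolP (w \in A).
  exact: IHp wA lastA pw.
by exists u, w.
Qed.

Lemma induced_connectedP F S :
  induced_connected F S <-> bipartitions_crossed F S.
Proof.
split=> [conS A sAS /set0Pn[u uA] AnS | crossS u v uS vS].
  have /properP[_ [v vS vNA]] : A \proper S by rewrite properEneq AnS.
  case/connectP: (conS u v (subsetP sAS u uA) vS) => p pth lastv.
  rewrite lastv in vNA.
  have [x [y [xA yNA /and3P[_ yS xyF]]]] := path_leaves uA vNA pth.
  by exists x, y.
apply: contraT => Nuv.
pose R := [set w in S | connect (induced_adj F S) u w].
have sRS : R \subset S by apply/subsetP=> w; rewrite inE => /andP[].
have uR : u \in R by rewrite inE uS connect0.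
have RnS : R != S.
  by apply: contraNneq Nuv => RS; move: vS; rewrite -{1}RS inE => /andP[].
have Rn0 : R != set0 by apply/set0Pn; exists u.
have [x [y [xR yS yNR xyF]]] := crossS R sRS Rn0 RnS.
move: xR; rewrite inE => /andP[xS uRx].
have uy : connect (induced_adj F S) u y.
  by apply: connect_trans uRx (connect1 _); rewrite /induced_adj xS yS xyF.
by rewrite inE yS uy in yNR.
Qed.

Section Partition.
Variables (F : {set {set V}}) (S : {set V}) (n : nat) (part : 'I_n -> {set V}).
Hypothesis crossS : bipartitions_crossed F S.
Hypothesis part_neq0 : forall i, part i != set0.
Hypothesis part_disjoint : forall i j, i != j -> [disjoint part i & part j].
Hypothesis part_sub : forall i, part i \subset S.
Hypothesis part_cover : forall x, x \in S -> exists i, x \in part i.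

Definition crossing_edges := [set e in F | [exists i, exists j,
  exists x, exists y, [&& i != j, x \in part i, y \in part j & e == [set x; y]]]].

Definition blocks_union (I : {set 'I_n}) := \bigcup_(i in I) part i.

Lemma notin_blocks_union (I : {set 'I_n}) j y :
  j \notin I -> y \in part j -> y \notin blocks_union I.
Proof.
move=> jNI yj; apply/bigcupP=> -[i iI yi].
have ij : i != j by apply: contraNneq jNI => <-.
by move: (part_disjoint ij); rewrite disjoint_sym => /disjointFr/(_ yj); rewrite yi.
Qed.

Lemma crossing_edge_out_of_blocks (I : {set 'I_n}) :
  I != set0 -> I != setT -> exists i j x y,
  [/\ i \in I, j \notin I, x \in part i, y \in part j & [set x; y] \in F].
Proof.
move=> /set0Pn[i0 i0I] /eqP InT.
have [j0 j0NI] : exists j, j \notin I.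
  by apply/existsP; rewrite -negb_forall; apply: contra_notN InT => /forallP IT;
     apply/setP=> i; rewrite inE IT.
have sUS : blocks_union I \subset S by apply/bigcupsP=> i _; exact: part_sub.
have /set0Pn[z0 z0i0] := part_neq0 i0.
have Un0 : blocks_union I != set0 by apply/set0Pn; exists z0; apply/bigcupP; exists i0.
have /set0Pn[z1 z1j0] := part_neq0 j0.
have UnS : blocks_union I != S.
  apply: contraNneq (notin_blocks_union j0NI z1j0) => ->.
  exact: subsetP (part_sub j0) z1 z1j0.
have [x [y [/bigcupP[i iI xi] yS yNU xyF]]] := crossS sUS Un0 UnS.
have [j yj] := part_cover yS.
exists i, j, x, y; split=> //.
by apply: contra yNU => jI; apply/bigcupP; exists j.
Qed.

Lemma crossing_edges_in_blocks k : 0 < k <= n ->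
  exists2 I : {set 'I_n}, #|I| = k &
  exists2 W : {set {set V}}, W \subset crossing_edges &
    k.-1 <= #|W| /\ {in W, forall e : {set V}, e \subset blocks_union I}.
Proof.
elim: k => [//|[|k] IHk] /andP[_ kn].
  exists [set Ordinal kn]; first exact: cards1.
  by exists set0; rewrite ?sub0set //; split=> // e; rewrite inE.
have [I cardI [W sWC [cardW sWI]]] := IHk (ltnW kn).
have In0 : I != set0 by rewrite -card_gt0 cardI.
have InT : I != setT.
  by apply: contraTneq kn => IT; rewrite -cardI IT cardsT card_ord ltnn.
have [i [j [x [y [iI jNI xi yj xyF]]]]] := crossing_edge_out_of_blocks In0 InT.
have yNU := notin_blocks_union jNI yj.
have xyNW : [set x; y] \notin W.
  by apply: contra yNU => /sWI/subsetP; apply; rewrite !inE eqxx orbT.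
have sUU : blocks_union I \subset blocks_union (j |: I).
  by apply/bigcupsP=> i' i'I; apply: bigcup_sup; rewrite inE i'I orbT.
exists (j |: I); first by rewrite cardsU1 jNI cardI.
exists ([set x; y] |: W).
  rewrite subUset sWC andbT sub1set inE xyF /=.
  apply/existsP; exists i; apply/existsP; exists j; apply/existsP; exists x.
  apply/existsP; exists y; rewrite xi yj eqxx !andbT.
  by apply: contraNneq jNI => <-.
split; first by rewrite cardsU1 xyNW.
move=> e; rewrite in_setU1 => /orP[/eqP -> | /sWI eU]; last exact: subset_trans sUU.
apply/subsetP=> z; rewrite !inE => /orP[] /eqP ->; apply/bigcupP.
  by exists i; rewrite // inE iI orbT.
by exists j; rewrite // !inE eqxx.
Qed.

Lemma card_crossing_edges : n - 1 <= #|crossing_edges|.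
Proof.
have [-> // | n_gt0] := posnP n.
have [|_ _ [W sWC [cardW _]]] := @crossing_edges_in_blocks n.
  by rewrite n_gt0 /=.
by rewrite subn1; apply: leq_trans cardW (subset_leq_card sWC).
Qed.

End Partition.
End Connectivity.

Section Relaxations.
Variables (V : finType) (HE : {set {set V}}).
Implicit Types (F : {set {set V}}) (S A B : {set V}) (C : seq {set V}).

Lemma card_edges_sub F S :
  bipartitions_crossed F S -> #|S| - 1 <= #|[set e in F | e \subset S]|.
Proof.
move=> crossS; pose part (i : 'I_#|S|) := [set enum_val i].
apply: leq_trans (@card_crossing_edges _ F S _ part crossS _ _ _ _) _.
- by move=> i; apply/set0Pn; exists (enum_val i); rewrite inE.
- move=> i j ij; rewrite disjoints1 inE; apply: contra ij.
  by move=> /eqP/enum_val_inj->.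
- by move=> i; rewrite sub1set enum_valP.
- by move=> x xS; exists (enum_rank_in xS x); rewrite inE enum_rankK_in.
apply/subset_leq_card/subsetP=> e; rewrite !inE => /andP[-> /existsP[i]] /=.
case/existsP=> j /existsP[x /existsP[y /and4P[_]]].
rewrite !inE => /eqP-> /eqP-> /eqP->.
by apply/subsetP=> z; rewrite !inE => /orP[] /eqP->; apply: enum_valP.
Qed.

Lemma card_cut_edges F S C : F \subset KH HE ->
  bipartitions_crossed F S -> in_P S C -> size C - 1 <= #|F :&: cut_edges HE C|.
Proof.
move=> sFK crossS [[_ [C_neq0 C_disjoint]] C_cover].
pose part (i : 'I_(size C)) := nth set0 C i.
apply: leq_trans (@card_crossing_edges _ F S _ part crossS _ _ _ _) _.
- by move=> i; apply: C_neq0.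
- by move=> i j; apply: C_disjoint (ltn_ord i) (ltn_ord j).
- by move=> i; rewrite -C_cover bigcup_seq (bigcup_sup (part i)) ?mem_nth.
- move=> x; rewrite -C_cover bigcup_seq => /bigcupP[Y YC xY].
  have iY : index Y C < size C by rewrite index_mem.
  by exists (Ordinal iY); rewrite /part nth_index.
apply/subset_leq_card/subsetP=> e; rewrite inE => /andP[eF].
case/existsP=> i /existsP[j /existsP[x /existsP[y /and4P[ij xi yj /eqP ee]]]].
rewrite in_setI eF inE (subsetP sFK e eF) /=.
apply/existsP; exists x; apply/existsP; exists y; rewrite ee eqxx /=.
by apply/existsP; exists i; apply/existsP; exists j; rewrite ij xi yj.
Qed.

Lemma cut_edges_pairP F A B : F \subset KH HE ->
  reflect (exists x y, [/\ x \in A, y \in B & [set x; y] \in F])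
          (F :&: cut_edges HE [:: A; B] != set0).
Proof.
move=> sFK; apply: (iffP (set0Pn _)) => [[e] | [x [y [xA yB xyF]]]].
- rewrite !inE => /andP[eF /andP[_ /existsP[x /existsP[y /andP[/eqP ee ij]]]]].
  subst e; case/existsP: ij => -[[|[|//]] ?] /existsP[[[|[|//]] ?]] /=;
    rewrite ?eqxx //= => /andP[xi yj].
    by exists x, y.
  by exists y, x; rewrite setUC.
- exists [set x; y]; rewrite in_setI xyF inE (subsetP sFK _ xyF) /=.
  apply/existsP; exists x; apply/existsP; exists y; rewrite eqxx /=.
  by apply/existsP; exists ord0; apply/existsP; exists ord_max; rewrite /= xA yB.
Qed.

Lemma B_H_crossed F S : F \subset KH HE ->
  (forall C, B_H HE C -> size C - 1 <= #|F :&: cut_edges HE C|) ->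
  S \in HE -> bipartitions_crossed F S.
Proof.
move=> sFK B_ok SHE A sAS A_neq0 AnS.
have /B_ok : B_H HE [:: A; S :\: A] by exists S => //; exists A.
rewrite card_gt0 => /(cut_edges_pairP _ _ sFK)[x [y [xA]]].
by rewrite inE => /andP[yNA yS] xyF; exists x, y.
Qed.

Lemma in_B_in_P S C : in_B S C -> in_P S C.
Proof.
case=> A [sAS [A_neq0 [AnS ->]]]; split; last first.
  rewrite big_cons big_seq1; apply/setP=> z; rewrite !inE.
  by case: (boolP (z \in A)) => //= /(subsetP sAS).
have /properP[_ [v vS vNA]] : A \proper S by rewrite properEneq AnS.
split=> //; split=> [[|[|//]] _ | [|[|//]] [|[|//]] _ _] //=.
- by apply/set0Pn; exists v; rewrite inE vNA.
- by rewrite disjoint_sym disjoints_subset subsetDr.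
- by rewrite disjoints_subset subsetDr.
Qed.

Lemma ilp_feasible_P_B F : ilp_feasible HE (P_H HE) F <-> ilp_feasible HE (B_H HE) F.
Proof.
split=> -[sFK [hyper_ok cuts_ok]]; split=> //; split=> // C [S SHE SC].
  by apply: cuts_ok; exists S; last exact: in_B_in_P.
exact: card_cut_edges sFK (B_H_crossed sFK cuts_ok SHE) SC.
Qed.

Lemma ilp_feasible_B_mci F :
  ilp_feasible HE (B_H HE) F <-> mci_feasible HE F /\ F \subset KH HE.
Proof.
split=> [[sFK [_ B_ok]] | [[F_edges F_conn] sFK]].
  split=> //; split=> [e /(subsetP sFK) | S SHE]; first by rewrite inE => /andP[].
  exact/induced_connectedP/(B_H_crossed sFK B_ok).
have crossed S : S \in HE -> bipartitions_crossed F S.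
  by move=> SHE; apply/induced_connectedP/F_conn.
split=> //; split=> [S /crossed/card_edges_sub // | C].
case=> S SHE [A [sAS [A_neq0 [AnS ->]]]].
rewrite card_gt0; apply/(cut_edges_pairP _ _ sFK).
have [x [y [xA yS yNA xyF]]] := crossed S SHE A sAS A_neq0 AnS.
by exists x, y; rewrite inE yNA yS.
Qed.

Lemma mci_feasible_setIKH F : mci_feasible HE F -> mci_feasible HE (F :&: KH HE).
Proof.
case=> F_edges F_conn; split=> [e /setIP[/F_edges] // | S SHE u v uS vS].
suff adjE : induced_adj (F :&: KH HE) S =2 induced_adj F S.
  by rewrite (eq_connect adjE); apply: F_conn.
move=> x y; rewrite /induced_adj in_setI.
have [xS | //] := boolP (x \in S); have [yS | //] := boolP (y \in S).
have [xyF | //] := boolP ([set x; y] \in F).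
rewrite /= inE F_edges //=; apply/existsP; exists S; rewrite SHE /=.
by apply/subsetP=> z; rewrite !inE => /orP[] /eqP->.
Qed.

Lemma mci_optimal_sub_KH F : mci_optimal HE F -> F \subset KH HE.
Proof.
case=> F_mci F_min; apply/setIidPl/eqP.
rewrite -(geq_leqif (subset_leqif_cards (subsetIl F (KH HE)))).
exact: F_min _ (mci_feasible_setIKH F_mci).
Qed.

End Relaxations.

Lemma ilp_optimal_feasible_eq (V : finType) (HE : {set {set V}}) Cs Cs' :
  (forall F, ilp_feasible HE Cs F <-> ilp_feasible HE Cs' F) ->
  forall F, ilp_optimal HE Cs F <-> ilp_optimal HE Cs' F.
Proof.
by move=> feas F; split=> -[/feas F_feas F_min]; split=> // G /feas; apply: F_min.
Qed.

Theorem proposition1 (V : finType) (HE : {set {set V}}) :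
  (forall X : {set {set V}},
     ilp_optimal HE (P_H HE) X <-> ilp_optimal HE (B_H HE) X) /\
  (forall X : {set {set V}},
     ilp_optimal HE (B_H HE) X <-> mci_optimal HE X).
Proof.
split; first exact/ilp_optimal_feasible_eq/ilp_feasible_P_B.
move=> F; split=> [[/ilp_feasible_B_mci[F_mci _] F_min] | F_opt].
  split=> // G G_mci; apply: leq_trans (subset_leq_card (subsetIl G (KH HE))).
  apply/F_min/ilp_feasible_B_mci; split; [exact: mci_feasible_setIKH | exact: subsetIr].
have [F_mci F_min] := F_opt.
split; first exact/ilp_feasible_B_mci/(conj F_mci (mci_optimal_sub_KH F_opt)).
by move=> G /ilp_feasible_B_mci[G_mci _]; apply: F_min.
Qed.
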